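(* Let $X$ be a finite connected poset, $F$ a field with $\mathrm{char}(F)=2$, and $\varphi$ a Lie automorphism of $I(X,F)$. The following are equivalent: (1) $\varphi(f^2)=\varphi(f)^2$ for all $f\in I(X,F)$; (2) $\varphi(E(I(X,F)))\subseteq E(I(X,F))$; (3) $\varphi(e_x)$ is an idempotent for every $x\in X$.
   Context: $I(X,F)$ is the incidence algebra of the locally finite poset $X$ over $F$ (functions $f:X\times X\to F$ vanishing unless $x\le y$, with product $(fg)(x,y)=\sum_{x\le z\le y}f(x,z)g(z,y)$). For $x\le y$, $e_{xy}\in I(X,F)$ is the function equal to $1$ at $(x,y)$ and $0$ elsewhere, and $e_x:=e_{xx}$. A poset is connected if any two elements are joined by a finite sequence of elements in which consecutive elements are comparable. $E(A)$ denotes the idempotents of $A$. In characteristic $2$, a Lie automorphism of $I(X,F)$ is a bijective $F$-linear map $\varphi$ with $\varphi(ab+ba)=\varphi(a)\varphi(b)+\varphi(b)\varphi(a)$ for all $a,b$. *)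

From HB Require Import structures.
From mathcomp Require Import all_boot all_order all_algebra.
Set Implicit Arguments. Unset Strict Implicit. Unset Printing Implicit Defensive.
Import GRing.Theory.
Local Open Scope ring_scope.

Definition is_partial_order (T : finType) (le : rel T) : Prop :=
  [/\ reflexive le, antisymmetric le & transitive le].

Definition poset_connected (T : finType) (le : rel T) : Prop :=
  forall x y : T, exists s : seq T,
    path (fun a b => le a b || le b a) x s /\ last x s = y.

(* Incidence algebra I(X,F): functions f : T * T -> F vanishing unless x <= y. *)
Record incalg (T : finType) (le : rel T) (F : fieldType) := IncAlg {
  ifun :> {ffun T * T -> F};
  _ : [forall p : T * T, ~~ le p.1 p.2 ==> (ifun p == 0)]
}.

Lemma IncAlg_prop (T : finType) (le : rel T) (F : fieldType) (f : incalg le F) :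
  [forall p : T * T, ~~ le p.1 p.2 ==> ((f : {ffun _ -> _}) p == 0)].
Proof. by case: f. Qed.

Section Ops.
Variables (T : finType) (le : rel T) (F : fieldType).

Lemma inc_add_proof (f g : incalg le F) :
  [forall p : T * T, ~~ le p.1 p.2 ==>
     ([ffun p => (f : {ffun _ -> _}) p + g p] p == 0)].
Proof.
have /forallP Hf := IncAlg_prop f; have /forallP Hg := IncAlg_prop g.
apply/forallP => p; apply/implyP => Hp; rewrite ffunE /=.
by rewrite (eqP (implyP (Hf p) Hp)) (eqP (implyP (Hg p) Hp)) addr0.
Qed.
Definition inc_add (f g : incalg le F) : incalg le F := IncAlg (inc_add_proof f g).

Lemma inc_scale_proof (c : F) (f : incalg le F) :
  [forall p : T * T, ~~ le p.1 p.2 ==> ([ffun p => c * (f : {ffun _ -> _}) p] p == 0)].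
Proof.
have /forallP Hf := IncAlg_prop f; apply/forallP => p; apply/implyP => Hp.
by rewrite ffunE /= (eqP (implyP (Hf p) Hp)) mulr0.
Qed.
Definition inc_scale (c : F) (f : incalg le F) : incalg le F :=
  IncAlg (inc_scale_proof c f).

Definition inc_mul_fun (f g : incalg le F) : {ffun T * T -> F} :=
  [ffun p => \sum_(z : T | le p.1 z && le z p.2)
               (f : {ffun _ -> _}) (p.1, z) * (g : {ffun _ -> _}) (z, p.2)].

Hypothesis le_trans : transitive le.

Lemma inc_mul_proof (f g : incalg le F) :
  [forall p : T * T, ~~ le p.1 p.2 ==> (inc_mul_fun f g p == 0)].
Proof.
apply/forallP => p; apply/implyP => Hp; rewrite ffunE big_pred0 //.
move=> z; apply/negP => /andP[H1 H2]; by rewrite (le_trans H1 H2) in Hp.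
Qed.
Definition inc_mul (f g : incalg le F) : incalg le F := IncAlg (inc_mul_proof f g).

End Ops.

Definition inc_idempotent (T : finType) (le : rel T) (F : fieldType)
  (le_trans : transitive le) (f : incalg le F) : Prop :=
  inc_mul le_trans f f = f.

Lemma inc_ex_proof (T : finType) (le : rel T) (F : fieldType)
  (le_refl : reflexive le) (x : T) :
  [forall p : T * T, ~~ le p.1 p.2 ==>
     ([ffun p : T * T => if p == (x, x) then (1 : F) else 0] p == 0)].
Proof.
apply/forallP => -[a b]; apply/implyP => Hp; rewrite ffunE /=.
case: ifP => [/eqP [Ha Hb]|_]; [by rewrite Ha Hb le_refl in Hp | by []].
Qed.
Definition inc_ex (T : finType) (le : rel T) (F : fieldType)
  (le_refl : reflexive le) (x : T) : incalg le F := IncAlg (inc_ex_proof F le_refl x).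

(* Lie automorphism in characteristic 2: bijective F-linear map preserving
   the Jordan/Lie product ab + ba. *)
Definition lie_automorphism_char2 (T : finType) (le : rel T) (F : fieldType)
  (le_trans : transitive le) (phi : incalg le F -> incalg le F) : Prop :=
  [/\ forall f g, phi (inc_add f g) = inc_add (phi f) (phi g),
      forall (c : F) f, phi (inc_scale c f) = inc_scale c (phi f),
      bijective phi &
      forall a b, phi (inc_add (inc_mul le_trans a b) (inc_mul le_trans b a)) =
                  inc_add (inc_mul le_trans (phi a) (phi b))
                          (inc_mul le_trans (phi b) (phi a))].

From HB Require Import structures.
From mathcomp Require Import all_boot all_order all_algebra.
From mathcomp Require Import ring.
Set Implicit Arguments. Unset Strict Implicit. Unset Printing Implicit Defensive.
Import GRing.Theory.
Local Open Scope ring_scope.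

(* In characteristic 2 the Lie product [a, b] = ab + ba is also the Jordan
   product, and squaring is additive up to it: (a + b)^2 = a^2 + b^2 + [a, b].
   Hence the defect D(f) = phi(f^2) + phi(f)^2 is additive and satisfies
   D(cf) = c^2 D(f), and the identity [f^2, g] = [f, [f, g]] shows that D(f)
   Lie-commutes with every phi(h), i.e. with everything: D(f) is central.  A
   central element of I(X,F) with zero diagonal vanishes.  On e_x the defect
   vanishes exactly when phi(e_x) is idempotent; for x < y we have
   e_xy = [e_x, e_xy] and e_xy^2 = 0, so phi(e_xy) is a Lie product, which has
   zero diagonal, and then so has D(e_xy) = phi(e_xy)^2.  So D vanishes on the
   basis {e_xy}, hence everywhere. *)

Section IncidenceAlgebra.
Variables (T : finType) (le : rel T) (F : fieldType).
Hypothesis le_trans : transitive le.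

Local Notation I := (incalg le F).
Local Notation add := (@inc_add T le F).
Local Notation scale := (@inc_scale T le F).
Local Notation mul := (inc_mul le_trans).

Lemma incalg_ext (f g : I) : (forall p, f p = g p) -> f = g.
Proof.
case: f g => [f Hf] [g Hg] /= fg.
have Efg : f = g by apply/ffunP.
by subst g; rewrite (bool_irrelevance Hf Hg).
Qed.

Lemma incalg_vanish (f : I) a b : ~~ le a b -> f (a, b) = 0.
Proof. by move=> nab; have /forallP/(_ (a, b))/implyP/(_ nab)/eqP := IncAlg_prop f. Qed.

Lemma inc_addE (f g : I) p : add f g p = f p + g p.
Proof. by rewrite ffunE. Qed.

Lemma inc_scaleE c (f : I) p : scale c f p = c * f p.
Proof. by rewrite ffunE. Qed.

Lemma inc_mulE (f g : I) p : mul f g p = \sum_z f (p.1, z) * g (z, p.2).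
Proof.
rewrite ffunE [RHS](bigID (fun z => le p.1 z && le z p.2)) /=.
rewrite [X in _ = _ + X]big1 ?addr0 // => z /nandP [] nle.
  by rewrite incalg_vanish ?mul0r.
by rewrite (incalg_vanish g) ?mulr0.
Qed.

Lemma inc_mulA (a b c : I) : mul (mul a b) c = mul a (mul b c).
Proof.
apply: incalg_ext => p; rewrite inc_mulE.
under eq_bigr => z _ do rewrite inc_mulE /= big_distrl.
rewrite exchange_big inc_mulE; apply: eq_bigr => w _ /=.
by rewrite inc_mulE big_distrr; apply: eq_bigr => z _ /=; rewrite mulrA.
Qed.

Lemma inc_mulDl (a b c : I) : mul (add a b) c = add (mul a c) (mul b c).
Proof.
apply: incalg_ext => p; rewrite inc_addE !inc_mulE -big_split.
by apply: eq_bigr => z _; rewrite inc_addE mulrDl.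
Qed.

Lemma inc_mulDr (a b c : I) : mul a (add b c) = add (mul a b) (mul a c).
Proof.
apply: incalg_ext => p; rewrite inc_addE !inc_mulE -big_split.
by apply: eq_bigr => z _; rewrite inc_addE mulrDr.
Qed.

Lemma inc_sqrZ c (a : I) : mul (scale c a) (scale c a) = scale (c ^+ 2) (mul a a).
Proof.
apply: incalg_ext => p; rewrite inc_scaleE !inc_mulE big_distrr.
by apply: eq_bigr => z _ /=; rewrite !inc_scaleE; ring.
Qed.

Lemma inc0_proof :
  [forall p : T * T, ~~ le p.1 p.2 ==> ([ffun _ : T * T => 0 : F] p == 0)].
Proof. by apply/forallP => p; rewrite ffunE eqxx implybT. Qed.
Definition inc0 : I := IncAlg inc0_proof.

Lemma inc0E p : inc0 p = 0.
Proof. by rewrite ffunE. Qed.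

Lemma inc_mul0 : mul inc0 inc0 = inc0.
Proof.
by apply: incalg_ext => p; rewrite inc_mulE big1 ?inc0E // => z _; rewrite inc0E mul0r.
Qed.

(* e_p, with junk value 0 when p is not a pair x <= y. *)
Lemma inc_elem_proof (p : T * T) : [forall q : T * T, ~~ le q.1 q.2 ==>
   ([ffun q : T * T => if (q == p) && le p.1 p.2 then 1 : F else 0] q == 0)].
Proof.
apply/forallP => q; apply/implyP => nle; rewrite ffunE.
by case: (q =P p) => [Eq|] //=; rewrite -Eq (negbTE nle).
Qed.
Definition inc_elem (p : T * T) : I := IncAlg (inc_elem_proof p).

Lemma inc_elemE p q : inc_elem p q = if (q == p) && le p.1 p.2 then 1 else 0.
Proof. by rewrite ffunE. Qed.

Lemma incalg_ind (P : I -> Prop) :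
    P inc0 ->
    (forall f g, P f -> P g -> P (add f g)) ->
    (forall c f, P f -> P (scale c f)) ->
    (forall p, le p.1 p.2 -> P (inc_elem p)) ->
  forall f, P f.
Proof.
move=> P0 PD PZ Pe f.
have [n] := ubnP #|[set q | f q != 0]|; elim: n f => // n IHn f.
have [supp0 _ | [p fp_neq0] supp_lt] := set_0Vmem [set q | f q != 0].
  suff -> : f = inc0 by [].
  apply: incalg_ext => q; rewrite inc0E.
  by apply/eqP; rewrite -[_ == 0]negbK -(in_set (fun q => f q != 0)) supp0 in_set0.
have le_p : le p.1 p.2.
  move: fp_neq0; rewrite in_set; apply: contraR => nle.
  by rewrite [p]surjective_pairing incalg_vanish.
pose g := add f (scale (- f p) (inc_elem p)).
have -> : f = add g (scale (f p) (inc_elem p)).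
  by apply: incalg_ext => q; rewrite !inc_addE !inc_scaleE mulNr addrNK.
apply: PD; last exact/PZ/Pe.
apply: IHn; rewrite -ltnS (leq_trans _ supp_lt) // ltnS.
rewrite (cardsD1 p [set q | f q != 0]) fp_neq0 add1n ltnS.
apply/subset_leq_card/subsetP => q; rewrite !in_set inc_addE inc_scaleE inc_elemE le_p andbT.
have [->|neq_qp] := eqVneq q p; first by rewrite mulr1 subrr eqxx.
by rewrite mulr0 addr0 in_set1 neq_qp.
Qed.

Definition inc_lie (a b : I) : I := add (mul a b) (mul b a).

Lemma inc_sqrD (a b : I) :
  mul (add a b) (add a b) = add (add (mul a a) (mul b b)) (inc_lie a b).
Proof. by rewrite inc_mulDl !inc_mulDr; apply: incalg_ext => p; rewrite !inc_addE; ring. Qed.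

Lemma inc_lieDl (a b c : I) : inc_lie (add a b) c = add (inc_lie a c) (inc_lie b c).
Proof. by rewrite /inc_lie inc_mulDl inc_mulDr; apply: incalg_ext => p; rewrite !inc_addE; ring. Qed.

Lemma inc_elem_sqr x y : x != y -> mul (inc_elem (x, y)) (inc_elem (x, y)) = inc0.
Proof.
move=> neq_xy; apply: incalg_ext => -[a b]; rewrite inc_mulE inc0E big1 // => z _ /=.
rewrite !inc_elemE !xpair_eqE; have [->|_] := eqVneq z y; last by rewrite andbF mul0r.
by rewrite [y == x]eq_sym (negbTE neq_xy) mulr0.
Qed.

Section Reflexive.
Hypothesis le_refl : reflexive le.
Local Notation ex := (inc_ex F le_refl).

Lemma inc_exE x a b : ex x (a, b) = if (a == x) && (b == x) then 1 else 0.
Proof. by rewrite ffunE xpair_eqE. Qed.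

Lemma inc_elem_diag x : inc_elem (x, x) = ex x.
Proof. by apply: incalg_ext => -[a b]; rewrite inc_elemE inc_exE le_refl andbT xpair_eqE. Qed.

Lemma inc_mul_exr (f : I) x a b : mul f (ex x) (a, b) = if b == x then f (a, x) else 0.
Proof.
rewrite inc_mulE (bigD1 x) //= big1 ?addr0 => [|z nzx]; last first.
  by rewrite inc_exE (negbTE nzx) mulr0.
by rewrite inc_exE eqxx; case: (b == x); rewrite ?mulr1 ?mulr0.
Qed.

Lemma inc_mul_exl (f : I) x a b : mul (ex x) f (a, b) = if a == x then f (x, b) else 0.
Proof.
rewrite inc_mulE (bigD1 x) //= big1 ?addr0 => [|z nzx]; last first.
  by rewrite inc_exE (negbTE nzx) andbF mul0r.
by rewrite inc_exE eqxx andbT; case: (a == x); rewrite ?mul1r ?mul0r.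
Qed.

Lemma inc_ex_idem x : mul (ex x) (ex x) = ex x.
Proof.
apply: incalg_ext => -[a b]; rewrite inc_mul_exr !inc_exE eqxx andbT.
by case: (b == x); rewrite ?andbT ?andbF.
Qed.

Lemma inc_lie_ex_elem x y : x != y -> inc_lie (ex x) (inc_elem (x, y)) = inc_elem (x, y).
Proof.
move=> neq_xy; apply: incalg_ext => -[a b].
rewrite inc_addE inc_mul_exl inc_mul_exr !inc_elemE !xpair_eqE eqxx (negbTE neq_xy) /=.
by case: (b == x); rewrite ?andbF ?addr0; case: (a == x).
Qed.

Lemma inc_central_eq0 (c : I) :
  (forall g, inc_lie c g = inc0) -> (forall z, c (z, z) = 0) -> c = inc0.
Proof.
move=> c_central c_diag; apply: incalg_ext => -[a b]; rewrite inc0E.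
have [<-|neq_ab] := eqVneq a b; first exact: c_diag.
have : inc_lie c (ex b) (a, b) = 0 by rewrite c_central inc0E.
by rewrite inc_addE inc_mul_exr inc_mul_exl eqxx (negbTE neq_ab) addr0.
Qed.

End Reflexive.

Lemma inc_mul_diag (le_anti : antisymmetric le) (f g : I) z :
  mul f g (z, z) = f (z, z) * g (z, z).
Proof.
rewrite inc_mulE (bigD1 z) //= big1 ?addr0 // => w neq_wz.
case le_zw: (le z w); last by rewrite incalg_vanish ?le_zw ?mul0r.
case le_wz: (le w z); last by rewrite (incalg_vanish g) ?le_wz ?mulr0.
by move: neq_wz; rewrite (le_anti z w) ?le_zw ?eqxx.
Qed.

End IncidenceAlgebra.

Section Char2.
Variables (T : finType) (le : rel T) (F : fieldType).
Hypotheses (le_anti : antisymmetric le) (le_trans : transitive le).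
Hypothesis pchar2 : (2%N \in [pchar F]).

Local Notation I := (incalg le F).
Local Notation add := (@inc_add T le F).
Local Notation mul := (inc_mul le_trans).
Local Notation lie := (inc_lie le_trans).

Lemma inc_addxx (f : I) : add f f = inc0 le F.
Proof. by apply: incalg_ext => p; rewrite inc_addE inc0E addrr_pchar2. Qed.

Lemma inc_lie_sqrl (a b : I) : lie (mul a a) b = lie a (lie a b).
Proof.
rewrite /inc_lie inc_mulDl inc_mulDr !inc_mulA; apply: incalg_ext => p.
by rewrite !inc_addE addrA addrK_pchar2.
Qed.

Lemma inc_add_eq0 (f g : I) : add f g = inc0 le F -> f = g.
Proof.
move=> fg0; apply: incalg_ext => p.
by rewrite -(addrK_pchar2 pchar2 (g p) (f p)) -inc_addE fg0 inc0E add0r.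
Qed.

Lemma inc_lie_diag (a b : I) z : lie a b (z, z) = 0.
Proof. by rewrite inc_addE !inc_mul_diag // mulrC addrr_pchar2. Qed.

End Char2.

Section LieAutomorphism.
Variables (T : finType) (le : rel T) (F : fieldType).
Hypotheses (le_refl : reflexive le) (le_anti : antisymmetric le).
Hypothesis le_trans : transitive le.
Hypothesis pchar2 : (2%N \in [pchar F]).
Variable phi : incalg le F -> incalg le F.
Hypothesis phi_lie_aut : lie_automorphism_char2 le_trans phi.

Local Notation I := (incalg le F).
Local Notation add := (@inc_add T le F).
Local Notation scale := (@inc_scale T le F).
Local Notation mul := (inc_mul le_trans).
Local Notation lie := (inc_lie le_trans).
Local Notation inc0 := (inc0 le F).
Local Notation ex := (inc_ex F le_refl).

Lemma phiD a b : phi (add a b) = add (phi a) (phi b).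
Proof. by case: phi_lie_aut. Qed.

Lemma phiZ c a : phi (scale c a) = scale c (phi a).
Proof. by case: phi_lie_aut. Qed.

Lemma phi_lie a b : phi (lie a b) = lie (phi a) (phi b).
Proof. by case: phi_lie_aut => _ _ _ ->. Qed.

Lemma phi_surj g : exists h, g = phi h.
Proof. by case: phi_lie_aut => _ _ [psi _ phiK] _; exists (psi g); rewrite phiK. Qed.

Lemma phi0 : phi inc0 = inc0.
Proof.
have -> : inc0 = scale 0 inc0 by apply: incalg_ext => p; rewrite inc_scaleE mul0r inc0E.
by rewrite phiZ; apply: incalg_ext => p; rewrite !inc_scaleE !mul0r.
Qed.

Definition sqr_defect f := add (phi (mul f f)) (mul (phi f) (phi f)).

Lemma sqr_defect0 : sqr_defect inc0 = inc0.
Proof. by rewrite /sqr_defect inc_mul0 phi0 inc_mul0 inc_addxx. Qed.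

Lemma sqr_defectD a b : sqr_defect (add a b) = add (sqr_defect a) (sqr_defect b).
Proof.
rewrite /sqr_defect inc_sqrD phiD phi_lie phiD phiD inc_sqrD; apply: incalg_ext => p.
rewrite !inc_addE; set J := mul (phi a) (phi b) p + _.
by rewrite addrACA (addrr_pchar2 pchar2 J) addr0 addrACA.
Qed.

Lemma sqr_defectZ c a : sqr_defect (scale c a) = scale (c ^+ 2) (sqr_defect a).
Proof.
rewrite /sqr_defect inc_sqrZ !phiZ inc_sqrZ; apply: incalg_ext => p.
by rewrite !(inc_addE, inc_scaleE) mulrDr.
Qed.

Lemma sqr_defect_central f g : lie (sqr_defect f) g = inc0.
Proof.
have [h ->] := phi_surj g.
by rewrite inc_lieDl -phi_lie inc_lie_sqrl // !phi_lie -inc_lie_sqrl // inc_addxx.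
Qed.

Lemma sqr_defect_elem p :
  (forall x, inc_idempotent le_trans (phi (ex x))) -> le p.1 p.2 ->
  sqr_defect (inc_elem le F p) = inc0.
Proof.
case: p => x y phi_ex_idem /= le_xy.
have [<-|neq_xy] := eqVneq x y.
  by rewrite inc_elem_diag /sqr_defect inc_ex_idem phi_ex_idem inc_addxx.
have phi_elem_diag z : phi (inc_elem le F (x, y)) (z, z) = 0.
  by rewrite -inc_lie_ex_elem // phi_lie inc_lie_diag.
apply: (inc_central_eq0 le_refl) => [g|z]; first exact: sqr_defect_central.
by rewrite inc_addE inc_elem_sqr // phi0 inc0E add0r inc_mul_diag // phi_elem_diag mul0r.
Qed.

Lemma phi_sqr_of_idem_ex :
  (forall x, inc_idempotent le_trans (phi (ex x))) ->
  forall f, phi (mul f f) = mul (phi f) (phi f).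
Proof.
move=> phi_ex_idem f; apply: inc_add_eq0 => //; change (sqr_defect f = inc0).
elim/incalg_ind: f => [|f g Df Dg|c f Df|p le_p].
- exact: sqr_defect0.
- by rewrite sqr_defectD Df Dg inc_addxx.
- by rewrite sqr_defectZ Df; apply: incalg_ext => p; rewrite inc_scaleE inc0E mulr0.
- exact: sqr_defect_elem.
Qed.

End LieAutomorphism.

Theorem lemma3p3 (T : finType) (le : rel T) (F : fieldType)
  (le_refl : reflexive le) (le_anti : antisymmetric le) (le_trans : transitive le)
  (Hconn : poset_connected le)
  (Hchar : (2%N \in [pchar F]))
  (phi : incalg le F -> incalg le F)
  (Hphi : lie_automorphism_char2 le_trans phi) :
  [<-> (forall f, phi (inc_mul le_trans f f) = inc_mul le_trans (phi f) (phi f));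
       (forall f, inc_idempotent le_trans f -> inc_idempotent le_trans (phi f));
       (forall x : T, inc_idempotent le_trans (phi (inc_ex F le_refl x)))].
Proof.
split; [|split].
- by move=> phi_sqr f f_idem; rewrite /inc_idempotent -phi_sqr f_idem.
- by move=> phi_idem x; apply/phi_idem/inc_ex_idem.
- exact: phi_sqr_of_idem_ex.
Qed.
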